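(* Let $n,k\in\mathbb N$ with $k\ge 2$, and let $b=n^k+1$. Then for every $m\in\{2,3,\dots,n\}$, the number $(m\cdot n)^k$ is antipalindromic in base $b$.
   Context: For an integer $b\ge 2$, every natural number $x$ has a unique base-$b$ expansion $x=a_\ell b^\ell+\dots+a_1b+a_0$ with $a_0,\dots,a_\ell\in\{0,1,\dots,b-1\}$ and $a_\ell\neq 0$. The number $x$ is antipalindromic in base $b$ if $a_j=b-1-a_{\ell-j}$ for all $j\in\{0,1,\dots,\ell\}$. *)

From mathcomp Require Import all_boot.
Set Implicit Arguments. Unset Strict Implicit. Unset Printing Implicit Defensive.

Definition is_base_expansion (b x : nat) (s : seq nat) : Prop :=
  [/\ size s > 0,
      all (fun a => a < b) s,
      last 0 s != 0
    & x = \sum_(j < size s) nth 0 s j * b ^ j].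

Definition antipalindromic (b x : nat) : Prop :=
  exists s : seq nat, is_base_expansion b x s /\
    forall j, j < size s ->
      nth 0 s j = b - 1 - nth 0 s ((size s).-1 - j).

From mathcomp Require Import all_boot.
From mathcomp Require Import zify.

(* With b = n^k + 1 and c = m^k we have (m n)^k = c (b - 1) = (c - 1) b + (b - c):
   two base-b digits whose sum is b - 1. *)

Lemma two_digit_base_expansion (b a0 a1 : nat) :
  a0 < b -> 0 < a1 < b -> is_base_expansion b (a0 + a1 * b) [:: a0; a1].
Proof.
move=> a0_lt /andP [a1_gt0 a1_lt]; split => //=.
- by rewrite a0_lt a1_lt.
- by rewrite -lt0n.
- by rewrite !big_ord_recr big_ord0 /= expn0 expn1 muln1.
Qed.

Lemma antipalindromic_two_digits (b a0 a1 : nat) :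
  a0 < b -> 0 < a1 < b -> a0 + a1 = b.-1 -> antipalindromic b (a0 + a1 * b).
Proof.
move=> a0_lt a1_bounds digit_sum.
exists [:: a0; a1]; split; first exact: two_digit_base_expansion.
by case=> [|[|j]] //= _; lia.
Qed.

Lemma antipalindromic_mul_in_succ_base (b c : nat) :
  2 <= c <= b.+1 -> antipalindromic b.+1 (c * b).
Proof.
move=> /andP [c_ge2 c_le].
have -> : c * b = (b.+1 - c) + c.-1 * b.+1 by nia.
by apply: antipalindromic_two_digits; lia.
Qed.

Theorem mainTheorem11 (n k : nat) :
  2 <= k ->
  forall m : nat, 2 <= m <= n ->
    antipalindromic (n ^ k + 1) ((m * n) ^ k).
Proof.
move=> k_ge2 m /andP [m_ge2 m_le_n].
have m_le_mk : m <= m ^ k by rewrite -{1}(expn1 m) leq_exp2l; lia.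
have mk_le_nk : m ^ k <= n ^ k by rewrite leq_exp2r //; lia.
rewrite expnMn addn1.
by apply: antipalindromic_mul_in_succ_base; lia.
Qed.
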